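(* Let $e\to H\to G\xrightarrow{q} K\to e$ be a short exact sequence of groups with $H\subset FCH(G)$ (i.e. $G$ is an FC-hypercentral extension of $K$). Then $G$ is FC-hypercentral if and only if $K$ is FC-hypercentral.
   Context: The FC-center $FC(G)$ is the subgroup of elements of $G$ with finite conjugacy class. The upper FC-central series $(F_\alpha)_\alpha$, indexed by ordinals, is defined by $F_0=\{e\}$, $F_{\beta+1}/F_\beta=FC(G/F_\beta)$, and $F_\alpha=\bigcup_{\beta<\alpha}F_\beta$ for limit ordinals $\alpha$. The FC-hypercenter is $FCH(G)=\bigcup_\alpha F_\alpha$, and $G$ is FC-hypercentral if $FCH(G)=G$. *)

From mathcomp Require Import all_boot.
From mathcomp Require Export monoid.

Set Implicit Arguments.
Unset Strict Implicit.
Unset Printing Implicit Defensive.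

Local Open Scope group_scope.

(* [FCmod S g]: for S a normal subgroup of G, this says that the coset gS has
   finitely many conjugates in G/S, i.e. gS lies in FC(G/S). *)
Definition FCmod (G : groupType) (S : G -> Prop) (g : G) : Prop :=
  exists s : seq G, forall y : G, exists2 z, z \in s & S (g ^ y / z).

(* The FC-hypercenter FCH(G): union of the upper FC-central series
   F_0 = {e}, F_(b+1) = preimage of FC(G/F_b), F_a = union_(b<a) F_b.
   It is defined here as the least subset of G containing e and closed under
   the step operator S |-> FCmod S (monotone and inflationary on normal
   subgroups), which is exactly the union of its transfinite iterates
   starting from {e}. *)
Definition FCH (G : groupType) (g : G) : Prop :=
  forall S : G -> Prop, S 1 -> (forall x, FCmod S x -> S x) -> S g.

Definition FC_hypercentral (G : groupType) : Prop := forall g : G, FCH g.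

From HB Require Import structures.
From mathcomp Require Import all_boot.
From mathcomp Require Import monoid.

Set Implicit Arguments.
Unset Strict Implicit.
Unset Printing Implicit Defensive.

Local Open Scope group_scope.

(* FCH(G) is the least subset containing 1 and closed under [FCmod], so each
   direction is an induction on the minimality of FCH: push the FC-closed
   test set forward along q (for K) or pull it back (for G).  Since q commutes
   with conjugation and division, a finite list of coset representatives maps
   to (resp. lifts from) one for the image; pulling back additionally needs the
   kernel of q, the base case, to lie in FCH(G). *)

Lemma morph_mulg1 (G K : groupType) (f : G -> K) :
  {morph f : x y / x * y} -> f 1 = 1.
Proof. by move=> fM; apply: (@mulgI _ (f 1)); rewrite -fM !mulg1. Qed.

Lemma surj_seq_lift (A B : Type) (f : A -> B) :
  (forall b, exists a, f a = b) -> forall s : seq B, exists t, map f t = s.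
Proof.
move=> f_surj; elim=> [|b s [t <-]]; first by exists [::].
by have [a <-] := f_surj b; exists (a :: t).
Qed.

Section FCHMorphism.

Variables (G K : groupType) (q : UMagmaMorphism.type G K).
Hypothesis q_surj : forall k : K, exists g : G, q g = k.

Lemma FCmod_image (S : K -> Prop) (x : G) :
  FCmod (fun g => S (q g)) x -> FCmod S (q x).
Proof.
move=> [s Hs]; exists (map q s) => y'; have [y <-] := q_surj y'.
have [z zs Sz] := Hs y; exists (q z); first exact: map_f.
by rewrite gmulfF gmulfJ in Sz.
Qed.

Lemma FCH_image (g : G) : FCH g -> FCH (q g).
Proof.
move=> FCHg T T1 T_FC; apply: (FCHg (fun g => T (q g))); first by rewrite gmulf1.
by move=> x /FCmod_image; exact: T_FC.
Qed.

Lemma FCmod_preimage (T : G -> Prop) (k : K) (g : G) :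
  FCmod (fun k => forall g, q g = k -> T g) k -> q g = k -> FCmod T g.
Proof.
move=> [s Hs] qgk; subst k; have [t def_s] := surj_seq_lift q_surj s.
exists t => y; have [z'] := Hs (q y); rewrite -def_s => /mapP[z zt ->] Tz.
by exists z => //; apply: Tz; rewrite gmulfF gmulfJ.
Qed.

Hypothesis ker_FCH : forall g : G, q g = 1 -> FCH g.

Lemma FCH_preimage (g : G) : FCH (q g) -> FCH g.
Proof.
move=> FCHqg T T1 T_FC; apply: (FCHqg (fun k => forall g, q g = k -> T g)).
- by move=> x /ker_FCH; apply.
- by move=> k FCk x qx; apply/T_FC/(FCmod_preimage FCk qx).
- by [].
Qed.

End FCHMorphism.

Theorem proposition2p7 (H G K : groupType) (i : H -> G) (q : G -> K)
  (i_morph : {morph i : x y / x * y}) (q_morph : {morph q : x y / x * y})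
  (i_inj : injective i) (q_surj : forall k : K, exists g : G, q g = k)
  (exact_mid : forall g : G, q g = 1 <-> exists h : H, i h = g)
  (H_in_FCH : forall h : H, FCH (i h)) :
  FC_hypercentral G <-> FC_hypercentral K.
Proof.
pose qM : UMagmaMorphism.type G K :=
  HB.pack q (isUMagmaMorphism.Build G K q (morph_mulg1 q_morph, q_morph)).
have ker_FCH (g : G) : qM g = 1 -> FCH g.
  by move=> /exact_mid [h <-]; exact: H_in_FCH.
split=> [FCH_G k | FCH_K g].
- by have [g <-] := q_surj k; exact: (@FCH_image _ _ qM q_surj).
- exact: (@FCH_preimage _ _ qM q_surj ker_FCH).
Qed.
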